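(* Fix $m\in\mathbb{R}$ and $[\ell',r']\subset(\ell,r)$. Let $(h_i)_{i\geq1}$ be continuous concave functions on $[\ell,r]$ converging uniformly on $[\ell,r]$ to a continuous concave function $h_0$. Then $\liminf_{i\to\infty}\mathbf{l}(h_i)\geq\mathbf{l}(h_0)$ and $\limsup_{i\to\infty}\mathbf{r}(h_i)\leq\mathbf{r}(h_0)$.
   Context: For a continuous concave $h$ on $[\ell,r]$ with one-sided derivatives $h'_\pm(x)=\lim_{y\to x^\pm}\frac{h(y)-h(x)}{y-x}$: $\mathbf{l}(h)=\inf\{x\in[\ell',r']: h'_+(x)\leq m\}$ if this set is non-empty and $\mathbf{l}(h)=r'$ otherwise; $\mathbf{r}(h)=\sup\{x\in[\ell',r']: h'_-(x)\geq m\}$ if this set is non-empty and $\mathbf{r}(h)=\ell'$ otherwise. *)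

From HB Require Import structures.
From mathcomp Require Import all_boot all_order all_algebra.
From mathcomp Require Import all_classical all_reals all_analysis.
Set Implicit Arguments. Unset Strict Implicit. Unset Printing Implicit Defensive.
Import Order.TTheory GRing.Theory Num.Theory.
Import numFieldNormedType.Exports.
Local Open Scope classical_set_scope.
Local Open Scope ring_scope.

Definition concave_on (R : realType) (a b : R) (h : R -> R) : Prop :=
  forall x y t : R, a <= x <= b -> a <= y <= b -> 0 <= t <= 1 ->
    t * h x + (1 - t) * h y <= h (t * x + (1 - t) * y).

Definition rderiv (R : realType) (h : R -> R) (x : R) : R :=
  lim ((fun y => (h y - h x) / (y - x)) @ x^'+).
Definition lderiv (R : realType) (h : R -> R) (x : R) : R :=
  lim ((fun y => (h y - h x) / (y - x)) @ x^'-).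

Definition lpt (R : realType) (m l' r' : R) (h : R -> R) : R :=
  let S := [set x | l' <= x <= r' /\ rderiv h x <= m] in
  if asbool (S !=set0) then inf S else r'.
Definition rpt (R : realType) (m l' r' : R) (h : R -> R) : R :=
  let S := [set x | l' <= x <= r' /\ lderiv h x >= m] in
  if asbool (S !=set0) then sup S else l'.

From HB Require Import structures.
From mathcomp Require Import all_boot all_order all_algebra.
From mathcomp Require Import all_classical all_reals all_analysis.
From mathcomp Require Import ring.
Import Order.TTheory GRing.Theory Num.Theory.
Import numFieldNormedType.Exports.
Local Open Scope classical_set_scope.
Local Open Scope ring_scope.
Set Implicit Arguments. Unset Strict Implicit.

(* The right derivative of a concave function at an interior point is the
   supremum of its chord slopes to the right.  So if b < l(h0), then
   m < h0'_+(b) and some chord [b, c] of h0 has slope > m; by uniform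
   convergence the chord [b, c] of h_i also has slope > m for i large, and by
   the three-chord inequality (h_i)'_+(x) > m for every x < b, i.e.
   l(h_i) >= b.  The reflection x |-> -x exchanges left and right derivatives
   and turns r(h) into -l of the reflected function, so the bound on r follows
   from the one on l. *)

Lemma limn_einf_ge_near (R : realType) (u : (\bar R)^nat) (x : \bar R) :
  (\forall n \near \oo, x <= u n)%E -> (x <= limn_einf u)%E.
Proof.
move=> [N _ xu]; rewrite limn_einf_lim; apply: lime_ge; first exact: is_cvg_einfs.
near=> n; apply: le_ereal_inf_tmp => _ [k /= nk <-]; apply: xu.
by apply: leq_trans nk; near: n; exists N.
Unshelve. all: by end_near. Qed.

Section concave_slopes.
Variable R : realType.
Implicit Types (h : R -> R) (l r x y z m : R).

Definition slope h x y := (h y - h x) / (y - x).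

Lemma concave_slope_le h l r x y z : concave_on l r h ->
  l <= x -> x < y -> y < z -> z <= r ->
  slope h y z <= slope h x z <= slope h x y.
Proof.
move=> hc lx xy yz zr.
have xz := lt_trans xy yz.
have [yx0 zy0 zx0] : [/\ 0 < y - x, 0 < z - y & 0 < z - x] by rewrite !subr_gt0.
have t01 : 0 <= (z - y) / (z - x) <= 1.
  by rewrite divr_ge0 ?ler_pdivrMr ?mul1r ?lerD2l ?lerN2 // ltW.
have chord : (z - y) * h x + (y - x) * h z <= h y * (z - x).
  have := hc x z _ _ _ t01.
  rewrite lx zr (le_trans lx (ltW xz)) (le_trans (ltW xz) zr) => /(_ isT isT).
  have -> : (z - y) / (z - x) * x + (1 - (z - y) / (z - x)) * z = y.
    by field; rewrite gt_eqF.
  have -> : (z - y) / (z - x) * h x + (1 - (z - y) / (z - x)) * h z =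
            ((z - y) * h x + (y - x) * h z) / (z - x).
    by field; rewrite gt_eqF.
  by rewrite ler_pdivrMr.
apply/andP; split; rewrite -subr_ge0.
- have -> : slope h x z - slope h y z =
      (h y * (z - x) - ((z - y) * h x + (y - x) * h z)) / ((z - x) * (z - y)).
    by rewrite /slope; field; rewrite !gt_eqF.
  by rewrite divr_ge0 ?subr_ge0// mulr_ge0// ltW.
- have -> : slope h x y - slope h x z =
      (h y * (z - x) - ((z - y) * h x + (y - x) * h z)) / ((y - x) * (z - x)).
    by rewrite /slope; field; rewrite !gt_eqF.
  by rewrite divr_ge0 ?subr_ge0// mulr_ge0// ltW.
Qed.

Lemma slope_ubound h l r x : concave_on l r h -> l < x ->
  ubound (slope h x @` `]x, r]) (slope h l x).
Proof.
move=> hc lx _ [y + <-]; rewrite /= in_itv/= => /andP[xy yr].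
by have /andP[] := concave_slope_le hc (lexx l) lx xy yr; apply: le_trans.
Qed.

Lemma rderiv_cvg h l r x : concave_on l r h -> l < x -> x < r ->
  slope h x y @[y --> x^'+] --> sup (slope h x @` `]x, r]).
Proof.
move=> hc lx xr; apply: nonincreasing_at_right_cvgr; first by rewrite bnd_simp.
- move=> y z; rewrite !in_itv/= => /andP[xy _] /andP[_ zr].
  rewrite le_eqVlt => /predU1P[-> //|yz].
  by have /andP[] := concave_slope_le hc (ltW lx) xy yz zr.
- by exists (slope h l x); exact: slope_ubound.
Qed.

Lemma rderiv_sup h l r x : concave_on l r h -> l < x -> x < r ->
  rderiv h x = sup (slope h x @` `]x, r]).
Proof.
by move=> hc lx xr; apply: cvg_lim; [exact: Rhausdorff|exact: rderiv_cvg hc lx xr].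
Qed.

Lemma has_sup_slope h l r x : concave_on l r h -> l < x -> x < r ->
  has_sup (slope h x @` `]x, r]).
Proof.
move=> hc lx xr; split; last by exists (slope h l x); exact: slope_ubound.
by exists (slope h x r), r => //=; rewrite in_itv/= xr lexx.
Qed.

Lemma slope_le_rderiv h l r x y : concave_on l r h -> l < x -> x < y -> y <= r ->
  slope h x y <= rderiv h x.
Proof.
move=> hc lx xy yr; have xr := lt_le_trans xy yr.
rewrite (rderiv_sup hc lx xr); apply: sup_upper_bound.
  exact: has_sup_slope hc lx xr.
by exists y => //=; rewrite in_itv/= xy yr.
Qed.

Lemma rderiv_gt_slope h l r x m : concave_on l r h -> l < x -> x < r ->
  m < rderiv h x -> exists2 y, x < y <= r & m < slope h x y.
Proof.
move=> hc lx xr; rewrite (rderiv_sup hc lx xr) -subr_gt0 => /sup_adherent.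
move=> /(_ _ (has_sup_slope hc lx xr)) [_ [y /= xyr <-]].
by rewrite opprB addrCA subrr addr0 => mlt; exists y.
Qed.

Lemma concave_on_reflect h l r : concave_on l r h -> concave_on (- r) (- l) (h \o -%R).
Proof.
move=> hc x y t /andP[rx xl] /andP[ry yl] t01 /=.
rewrite opprD -!mulrN; apply: hc t01.
- by rewrite lerNr xl lerNl rx.
- by rewrite lerNr yl lerNl ry.
Qed.

Lemma lderiv_reflect h l r x : concave_on l r h -> l < x -> x < r ->
  lderiv h x = - rderiv (h \o -%R) (- x).
Proof.
move=> hc lx xr.
have cv := rderiv_cvg (concave_on_reflect hc) (_ : - r < - x) (_ : - x < - l).
rewrite /rderiv (cvg_lim _ (cv _ _)) ?ltrN2 //; apply: cvg_lim => //.
apply/cvg_at_leftNP; rewrite (_ : _ \o _ = - slope (h \o -%R) (- x)).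
  by apply: cvgN; apply: cv; rewrite ltrN2.
by apply/funext => y; rewrite /slope /= !opprK -opprD invrN mulrN.
Qed.

End concave_slopes.

Section lpt.
Variables (R : realType) (m l' r' : R).
Implicit Types (h : R -> R) (l r b c : R).

Lemma lpt_le h : lpt m l' r' h <= r'.
Proof.
rewrite /lpt; case: asboolP => // -[x [/andP[l'x xr'] hx]].
apply: (le_trans _ xr'); apply: ge_inf; last by split => //; rewrite l'x xr'.
by exists l' => y [/andP[]].
Qed.

Lemma lpt_ge h : l' <= r' -> l' <= lpt m l' r' h.
Proof.
move=> l'r'; rewrite /lpt; case: asboolP => // ne.
by apply: lb_le_inf => // x [/andP[]].
Qed.

Lemma lt_lpt_rderiv h b : l' <= b -> b < lpt m l' r' h -> m < rderiv h b.
Proof.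
move=> l'b blpt; have br' := ltW (lt_le_trans blpt (lpt_le h)).
rewrite ltNge; apply: contraTN blpt => hb; rewrite -leNgt /lpt.
have Sb : [set x | l' <= x <= r' /\ rderiv h x <= m] b by split => //; rewrite l'b.
case: asboolP => [_|[]]; last by exists b.
by apply: ge_inf Sb; exists l' => y [/andP[]].
Qed.

Lemma lpt_ge_slope l r h b c : concave_on l r h -> l < l' -> b <= r' ->
  b < c -> c <= r -> m < slope h b c -> b <= lpt m l' r' h.
Proof.
move=> hc ll' br' bc cr mbc; rewrite /lpt; case: asboolP => // ne.
apply: lb_le_inf => // x [/andP[l'x _] hxm]; rewrite leNgt; apply/negP => xb.
have lx := lt_le_trans ll' l'x.
have /andP[hbc _] := concave_slope_le hc (ltW lx) xb bc cr.
have := lt_le_trans mbc (le_trans hbc (slope_le_rderiv hc lx (lt_trans xb bc) cr)).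
by rewrite ltNge hxm.
Qed.

End lpt.

Definition ucvg_on (R : realType) (l r : R) (h : nat -> R -> R) (h0 : R -> R) :=
  forall e : R, 0 < e -> exists N : nat, forall i : nat, (N <= i)%N ->
    forall x : R, l <= x <= r -> `|h i x - h0 x| < e.

Section uniform_convergence.
Variables (R : realType) (l r : R) (h : nat -> R -> R) (h0 : R -> R).
Hypothesis hcvg : ucvg_on l r h h0.

Lemma ucvg_on_cvg x : l <= x <= r -> h i x @[i --> \oo] --> h0 x.
Proof.
move=> xlr; apply/cvgrPdist_lt => e e0; have [N hN] := hcvg e0.
by exists N => // i Ni; rewrite distrC; exact: hN.
Qed.

Lemma ucvg_on_slope x y : l <= x <= r -> l <= y <= r ->
  slope (h i) x y @[i --> \oo] --> slope h0 x y.
Proof. by move=> xlr ylr; apply: cvgMl; apply: cvgB; exact: ucvg_on_cvg. Qed.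

Lemma ucvg_on_reflect : ucvg_on (- r) (- l) (fun i => h i \o -%R) (h0 \o -%R).
Proof.
move=> e e0; have [N hN] := hcvg e0; exists N => i Ni x /andP[rx xl].
by apply: hN => //; rewrite lerNr xl lerNl rx.
Qed.

End uniform_convergence.

Lemma lpt_ge_near (R : realType) (m l r l' r' b : R) h h0 : l < l' -> r' < r ->
  (forall i, concave_on l r (h i)) -> concave_on l r h0 -> ucvg_on l r h h0 ->
  l' <= b -> b < lpt m l' r' h0 -> \forall i \near \oo, b <= lpt m l' r' (h i).
Proof.
move=> ll' r'r hc h0c hcvg l'b blpt.
have br' : b <= r' := ltW (lt_le_trans blpt (lpt_le _ _ _ _)).
have lb := lt_le_trans ll' l'b; have br := le_lt_trans br' r'r.
have [c /andP[bc cr] mbc] := rderiv_gt_slope h0c lb br (lt_lpt_rderiv l'b blpt).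
have blr : l <= b <= r by rewrite !ltW.
have clr : l <= c <= r by rewrite cr ltW ?(lt_trans lb bc).
near=> i; apply: (lpt_ge_slope (hc i) ll' br' bc cr); near: i.
exact: cvgr_gt (ucvg_on_slope hcvg blr clr) _ mbc.
Unshelve. all: by end_near. Qed.

Lemma lpt_le_liminf (R : realType) (m l r l' r' : R) h h0 :
  l < l' -> l' <= r' -> r' < r ->
  (forall i, concave_on l r (h i)) -> concave_on l r h0 -> ucvg_on l r h h0 ->
  ((lpt m l' r' h0)%:E <= limn_einf (fun i => (lpt m l' r' (h i))%:E))%E.
Proof.
move=> ll' l'r' r'r hc h0c hcvg; apply/lee_subgt0Pr => e e0.
apply: limn_einf_ge_near; rewrite -EFinB.
have [bl'|l'b] := ltP (lpt m l' r' h0 - e) l'.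
  by apply: nearW => i; rewrite lee_fin (le_trans (ltW bl')) ?lpt_ge.
have blpt : lpt m l' r' h0 - e < lpt m l' r' h0 by rewrite ltrBlDr ltrDl.
by apply: filterS (lpt_ge_near ll' r'r hc h0c hcvg l'b blpt) => i; rewrite lee_fin.
Qed.

Lemma rpt_reflect (R : realType) (m l r l' r' : R) h : concave_on l r h ->
  l < l' -> r' < r -> rpt m l' r' h = - lpt (- m) (- r') (- l') (h \o -%R).
Proof.
move=> hc ll' r'r; rewrite /rpt /lpt.
set S := [set x | _ /\ m <= lderiv h x]; set T := [set y | _ /\ _ <= - m].
have lderivE x : l' <= x <= r' -> lderiv h x = - rderiv (h \o -%R) (- x).
  move=> /andP[l'x xr']; apply: lderiv_reflect hc _ _.
  - exact: lt_le_trans ll' l'x.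
  - exact: le_lt_trans xr' r'r.
have TS : -%R @` T = S.
  apply/seteqP; split => [_ [y [/andP[ry yl] hy] <-]|x [xlr hx]].
  - have xlr : l' <= - y <= r' by rewrite lerNr yl lerNl ry.
    by split => //; rewrite lderivE // opprK lerNr.
  - exists (- x); last exact: opprK.
    split; last by rewrite lerNr -lderivE.
    by case/andP: xlr => l'x xr'; rewrite !lerN2 l'x xr'.
rewrite -TS; case: (pselect (T !=set0)) => [Tne|T0].
- by rewrite !asboolT //; [rewrite /inf opprK | exact: image_nonempty].
- by rewrite !asboolF ?opprK // => -[_ [y Ty _]]; apply: T0; exists y.
Qed.

Theorem mainTheorem19 (R : realType) (m l r l' r' : R)
  (h : nat -> R -> R) (h0 : R -> R) :
  l < l' -> l' <= r' -> r' < r ->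
  (forall i, {within `[l, r], continuous (h i)}) ->
  (forall i, concave_on l r (h i)) ->
  {within `[l, r], continuous h0} ->
  concave_on l r h0 ->
  (forall e : R, 0 < e -> exists N : nat, forall i : nat, (N <= i)%N ->
     forall x : R, l <= x <= r -> `|h i x - h0 x| < e) ->
  ((lpt m l' r' h0)%:E <= limn_einf (fun i => (lpt m l' r' (h i))%:E))%E /\
  (limn_esup (fun i => (rpt m l' r' (h i))%:E) <= (rpt m l' r' h0)%:E)%E.
Proof.
move=> ll' l'r' r'r _ hc _ h0c hcvg.
split; first exact: lpt_le_liminf ll' l'r' r'r hc h0c hcvg.
have -> : (fun i => (rpt m l' r' (h i))%:E) =
    -%E \o (fun i => (lpt (- m) (- r') (- l') (h i \o -%R))%:E).
  by apply/funext => i; rewrite /= (rpt_reflect _ (hc i)) // EFinN.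
rewrite limn_esupN (rpt_reflect _ h0c) // EFinN leeN2.
apply: (@lpt_le_liminf _ _ (- r) (- l)); rewrite ?ltrN2 ?lerN2 //.
- by move=> i; exact: concave_on_reflect.
- exact: concave_on_reflect.
- exact: ucvg_on_reflect.
Qed.
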